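(* On the sphere $S^2=\{\underline r\in\mathbb{R}^3:\langle\underline r,\underline r\rangle=1\}$, for $\underline v\in\mathbb{R}^3$ define the vector fields $X[\underline v](\underline r)=\underline v-\underline r\,\langle \underline v,\underline r\rangle$ and $Y[\underline v](\underline r)=\underline v\times\underline r$, and let $X_i=X[\underline e_i]$, $Y_i=Y[\underline e_i]$ for the standard basis $\underline e_1,\underline e_2,\underline e_3$ of $\mathbb{R}^3$. Let $$\psi=\sum_{i,j=1}^3\Big(Y[\underline e_i\times\underline e_j]\otimes Y_j-X_j\otimes X[\underline e_i\times\underline e_j]\Big)\otimes Y_i\ \in\ \mathrm{diff}(S^2)\otimes_{\mathbb{R}}\mathrm{diff}(S^2)\otimes_{\mathbb{R}}\mathrm{diff}(S^2),$$ and let $\pi$ be the natural map from $\mathrm{diff}(S^2)^{\otimes_{\mathbb{R}}3}$ to the triple tensor product $\mathrm{diff}(S^2)\otimes_{C^\infty(S^2)}\mathrm{diff}(S^2)\otimes_{C^\infty(S^2)}\mathrm{diff}(S^2)$ of the module of vector fields over $C^\infty(S^2)$. Then $\pi\psi=0$.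
   Context: $\langle\ ,\ \rangle$ is the standard inner product and $\times$ the vector cross product on $\mathbb{R}^3$; $\mathrm{diff}(S^2)$ denotes the Lie algebra of smooth vector fields on $S^2$. *)

From HB Require Import structures.
From mathcomp Require Import all_boot all_order all_algebra.
From mathcomp Require Import all_classical all_reals all_analysis.
Set Implicit Arguments. Unset Strict Implicit. Unset Printing Implicit Defensive.
Import Order.TTheory GRing.Theory Num.Theory.
Import numFieldNormedType.Exports.
Local Open Scope ring_scope.

Section Defs.
Variable R : realType.
Local Notation V := 'rV[R]_3.

Definition dot (u v : V) : R := \sum_(k < 3) u 0 k * v 0 k.

Definition cross (u v : V) : V :=
  \row_(k < 3) (u 0 (ordS k) * v 0 (ordS (ordS k))
                - u 0 (ordS (ordS k)) * v 0 (ordS k)).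

Definition ebase (i : 'I_3) : V := delta_mx 0 i.

Definition S2 := {r : V | dot r r == 1}.

Fixpoint iterD (vs : seq V) (f : V -> R) : V -> R :=
  match vs with
  | [::] => f
  | v :: vs' => fun x => 'D_v (iterD vs' f) x
  end.

Definition smoothR3 (f : V -> R) : Prop :=
  forall (vs : seq V) (x : V), differentiable (iterD vs f) x.

Definition smoothS2 (f : S2 -> R) : Prop :=
  exists g : V -> R, smoothR3 g /\ forall r : S2, f r = g (val r).

Definition is_vf (X : S2 -> V) : Prop :=
  (forall r : S2, dot (X r) (val r) = 0) /\
  (forall k : 'I_3, smoothS2 (fun r => X r 0 k)).

Definition Xf (v : V) : S2 -> V := fun r => v - dot v (val r) *: val r.
Definition Yf (v : V) : S2 -> V := fun r => cross v (val r).

Definition vf_add (X Y : S2 -> V) : S2 -> V := fun r => X r + Y r.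
Definition vf_scale (f : S2 -> R) (X : S2 -> V) : S2 -> V := fun r => f r *: X r.

(* T is additive in each argument and C^infinity(S^2)-balanced on vector
   fields, i.e. T induces a map out of diff(S^2) (x)_{C^oo} diff(S^2)
   (x)_{C^oo} diff(S^2) (universal property of the tensor product). *)
Definition Cinf_trilinear (M : zmodType)
    (T : (S2 -> V) -> (S2 -> V) -> (S2 -> V) -> M) : Prop :=
  [/\ (forall A A' B C, is_vf A -> is_vf A' -> is_vf B -> is_vf C ->
         T (vf_add A A') B C = T A B C + T A' B C),
      (forall A B B' C, is_vf A -> is_vf B -> is_vf B' -> is_vf C ->
         T A (vf_add B B') C = T A B C + T A B' C),
      (forall A B C C', is_vf A -> is_vf B -> is_vf C -> is_vf C' ->
         T A B (vf_add C C') = T A B C + T A B C'),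
      (forall f A B C, smoothS2 f -> is_vf A -> is_vf B -> is_vf C ->
         T (vf_scale f A) B C = T A (vf_scale f B) C) &
      (forall f A B C, smoothS2 f -> is_vf A -> is_vf B -> is_vf C ->
         T A (vf_scale f B) C = T A B (vf_scale f C))].

End Defs.

(* A tangent vector u at r is u = sum_c u_c (e_c - r_c r), so every tangent field is
   a C^oo(S^2)-combination of X_1, X_2, X_3.  Balancedness moves all coefficients into
   the last slot, T(A, B, C) = sum_{a,b,c} T(X_a, X_b, A_a B_b C_c X_c), and the sum in
   question becomes sum_{a,b,c} T(X_a, X_b, h_abc X_c), where h_abc is a polynomial
   multiple of |r|^2 - 1, hence zero on S^2.  All fields and coefficients occurring are
   polynomial, and polynomial functions are smooth because they are closed under
   directional derivatives. *)

From HB Require Import structures.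
From mathcomp Require Import all_boot all_order all_algebra.
From mathcomp Require Import all_classical all_reals all_analysis.
From mathcomp Require Import ring.
Import Order.TTheory GRing.Theory Num.Theory.
Local Open Scope ring_scope.

Set Implicit Arguments. Unset Strict Implicit. Unset Printing Implicit Defensive.

Section AdditiveOn.
Variables (U W : zmodType) (P : U -> Prop) (phi : U -> W).
Hypotheses (P0 : P 0) (PD : forall u v, P u -> P v -> P (u + v))
  (PN : forall u, P u -> P (- u))
  (phiD : forall u v, P u -> P v -> phi (u + v) = phi u + phi v).

Lemma additive_on0 : phi 0 = 0.
Proof. by apply: (addrI (phi 0)); rewrite -phiD // !addr0. Qed.

Lemma additive_onN u : P u -> phi (- u) = - phi u.
Proof.
by move=> Pu; apply/eqP; rewrite -addr_eq0 -phiD ?addNr ?additive_on0 //; exact: PN.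
Qed.

Lemma additive_onB u v : P u -> P v -> phi (u - v) = phi u - phi v.
Proof. by move=> Pu Pv; rewrite phiD ?additive_onN //; exact: PN. Qed.

Lemma additive_on_sum I (s : seq I) (F : I -> U) :
  (forall i, P (F i)) -> phi (\sum_(i <- s) F i) = \sum_(i <- s) phi (F i).
Proof.
move=> PF; elim: s => [|i s IHs]; first by rewrite !big_nil additive_on0.
by rewrite !big_cons phiD ?IHs //; apply: big_ind.
Qed.

End AdditiveOn.

Section PolynomialFunctions.
Variables (R : realType) (n : nat).
Local Notation V := 'rV[R]_n.

Inductive poly_fun : (V -> R) -> Prop :=
| poly_fun_cst c : poly_fun (fun=> c)
| poly_fun_coord k : poly_fun (fun x => x 0 k)
| poly_funD f g : poly_fun f -> poly_fun g -> poly_fun (f + g)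
| poly_funM f g : poly_fun f -> poly_fun g -> poly_fun (f * g).

Lemma poly_funN f : poly_fun f -> poly_fun (- f).
Proof.
move=> pf; have -> : - f = (fun=> -1) * f by apply/funext => x; rewrite /= mulN1r.
exact/poly_funM/pf/poly_fun_cst.
Qed.

Lemma poly_funB f g : poly_fun f -> poly_fun g -> poly_fun (f - g).
Proof. by move=> pf pg; apply/poly_funD/poly_funN. Qed.

Lemma poly_fun_sum I (s : seq I) (F : I -> V -> R) :
  (forall i, poly_fun (F i)) -> poly_fun (\sum_(i <- s) F i).
Proof. by move=> pF; apply: big_ind => //; [exact: poly_fun_cst | exact: poly_funD]. Qed.

Lemma poly_fun_differentiable f x : poly_fun f -> differentiable f x.
Proof.
elim=> {f} [c|k|f g _ df _ dg|f g _ df _ dg].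
- exact: differentiable_cst.
- exact: differentiable_coord.
- exact: differentiableD.
- exact: differentiableM.
Qed.

Lemma derive_coord k (x v : V) : 'D_v (fun y : V => y 0 k) x = v 0 k.
Proof. by rewrite -{2}(derive_id x v) derive_mx // mxE. Qed.

Lemma poly_fun_derive f v : poly_fun f -> poly_fun ('D_v f).
Proof.
have der g x : poly_fun g -> derivable g x v.
  by move=> pg; apply/diff_derivable/poly_fun_differentiable.
elim=> {f} [c|k|f g pf IHf pg IHg|f g pf IHf pg IHg].
- have -> : 'D_v (fun=> c) = fun=> 0 by apply/funext => x; exact: derive_cst.
  exact: poly_fun_cst.
- have -> : 'D_v (fun y : V => y 0 k) = fun=> v 0 k.
    by apply/funext => x; exact: derive_coord.
  exact: poly_fun_cst.
- have -> : 'D_v (f + g) = 'D_v f + 'D_v g.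
    by apply/funext => x; rewrite deriveD //; exact: der.
  exact: poly_funD.
- have -> : 'D_v (f * g) = f * 'D_v g + g * 'D_v f.
    by apply/funext => x; rewrite deriveM //; exact: der.
  by apply: poly_funD; apply: poly_funM.
Qed.

End PolynomialFunctions.

Lemma poly_fun_smooth (R : realType) (f : 'rV[R]_3 -> R) : poly_fun f -> smoothR3 f.
Proof.
move=> pf vs x; apply: poly_fun_differentiable.
by elim: vs => //= v vs IHvs; apply: poly_fun_derive.
Qed.

Section Sphere.
Variable R : realType.
Local Notation V := 'rV[R]_3.
Local Notation S2 := (S2 R).

Lemma row3_coords (x : V) : exists x0 x1 x2 : R, x = \row_k [:: x0; x1; x2]`_k.
Proof.
exists (x 0 0), (x 0 1), (x 0 2%:R); apply/rowP => -[[|[|[|k]]] Hk] //; rewrite mxE /=;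
  by congr (x 0 _); apply: val_inj.
Qed.

Lemma dotDl (u w x : V) : dot (u + w) x = dot u x + dot w x.
Proof. by rewrite /dot -big_split; apply: eq_bigr => k _; rewrite mxE mulrDl. Qed.

Lemma dotZl (c : R) (u x : V) : dot (c *: u) x = c * dot u x.
Proof. by rewrite /dot mulr_sumr; apply: eq_bigr => k _; rewrite mxE mulrA. Qed.

Lemma dot0l (x : V) : dot 0 x = 0.
Proof. by rewrite -(scale0r 0) dotZl mul0r. Qed.

Lemma dot_ebasel i (x : V) : dot (ebase R i) x = x 0 i.
Proof.
rewrite /dot (bigD1 i) //= big1 => [|k /negPf ik]; rewrite mxE.
  by rewrite !eqxx mul1r addr0.
by rewrite ik andbF mul0r.
Qed.

Lemma dot_crossl_self (v x : V) : dot (cross v x) x = 0.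
Proof.
have [x0 [x1 [x2 ->]]] := row3_coords x; have [v0 [v1 [v2 ->]]] := row3_coords v.
by rewrite /dot !big_ord_recr big_ord0 /= !mxE /=; ring.
Qed.

Lemma sphere_dot (r : S2) : dot (val r) (val r) = 1.
Proof. exact/eqP/(valP r). Qed.

Lemma tangent_frame (u x : V) :
  dot u x = 0 -> \sum_(c < 3) u 0 c *: (ebase R c - dot (ebase R c) x *: x) = u.
Proof.
move=> ux; under eq_bigr do rewrite dot_ebasel scalerBr scalerA.
by rewrite sumrB -scaler_suml -row_sum_delta -/(dot u x) ux scale0r subr0.
Qed.

Definition polyS2 (f : S2 -> R) := exists2 p : V -> R, poly_fun p & f = p \o val.

Lemma polyS2_smooth f : polyS2 f -> smoothS2 f.
Proof. by case=> p /poly_fun_smooth sp ->; exists p. Qed.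

Lemma polyS2_cst c : polyS2 (fun=> c).
Proof. by exists (fun=> c) => //; exact: poly_fun_cst. Qed.

Lemma polyS2D f g : polyS2 f -> polyS2 g -> polyS2 (f + g).
Proof. by case=> p pp -> [q pq ->]; exists (p + q) => //; exact: poly_funD. Qed.

Lemma polyS2N f : polyS2 f -> polyS2 (- f).
Proof. by case=> p pp ->; exists (- p) => //; exact: poly_funN. Qed.

Lemma polyS2M f g : polyS2 f -> polyS2 g -> polyS2 (f * g).
Proof. by case=> p pp -> [q pq ->]; exists (p * q) => //; exact: poly_funM. Qed.

Definition poly_vf (X : S2 -> V) :=
  (forall r, dot (X r) (val r) = 0) /\ forall k, polyS2 (fun r => X r 0 k).

Lemma poly_vf_is_vf X : poly_vf X -> is_vf X.
Proof. by case=> tX pX; split=> // k; apply: polyS2_smooth. Qed.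

Lemma poly_vf0 : poly_vf 0.
Proof.
split=> [r|k]; first exact: dot0l.
by rewrite (_ : (fun=> _) = fun=> 0); [exact: polyS2_cst | apply/funext => r; rewrite mxE].
Qed.

Lemma poly_vfD X Y : poly_vf X -> poly_vf Y -> poly_vf (X + Y).
Proof.
case=> tX pX [tY pY]; split=> [r|k]; first by rewrite dotDl tX tY addr0.
by rewrite (_ : (fun=> _) = (fun r => X r 0 k) + (fun r => Y r 0 k));
  [exact: polyS2D | apply/funext => r; rewrite mxE].
Qed.

Lemma poly_vf_scale f X : polyS2 f -> poly_vf X -> poly_vf (vf_scale f X).
Proof.
move=> pf [tX pX]; split=> [r|k]; first by rewrite dotZl tX mulr0.
by rewrite (_ : (fun=> _) = f * (fun r => X r 0 k));
  [exact: polyS2M | apply/funext => r; rewrite mxE].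
Qed.

Lemma poly_fun_dot (v : V) : poly_fun (dot v).
Proof.
rewrite (_ : dot v = \sum_(k < 3) ((fun=> v 0 k) * (fun x : V => x 0 k))).
  by apply: poly_fun_sum => k; apply: poly_funM; constructor.
by rewrite fct_sumE; apply/funext => x.
Qed.

Lemma poly_vf_Xf v : poly_vf (Xf v).
Proof.
split=> [r|k].
  by rewrite /Xf dotDl -scaleNr dotZl sphere_dot mulr1 addrN.
exists ((fun=> v 0 k) - dot v * (fun x : V => x 0 k)); last first.
  by apply/funext => r; rewrite /Xf !mxE.
by apply: poly_funB; [|apply: poly_funM; [exact: poly_fun_dot|]]; constructor.
Qed.

Lemma poly_vf_Yf v : poly_vf (Yf v).
Proof.
split=> [r|k]; first exact: dot_crossl_self.
exists ((fun=> v 0 (ordS k)) * (fun x : V => x 0 (ordS (ordS k))) -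
        (fun=> v 0 (ordS (ordS k))) * (fun x : V => x 0 (ordS k))); last first.
  by apply/funext => r; rewrite /Yf mxE.
by apply: poly_funB; apply: poly_funM; constructor.
Qed.

Lemma poly_vf_scale_Xf f c : polyS2 f -> poly_vf (vf_scale f (Xf (ebase R c))).
Proof. by move=> pf; apply/poly_vf_scale/poly_vf_Xf. Qed.

Lemma vf_scale1 (X : S2 -> V) : vf_scale (fun=> 1) X = X.
Proof. by apply/funext => r; rewrite /vf_scale scale1r. Qed.

Lemma vf_scale_frame f X : poly_vf X ->
  vf_scale f X = \sum_(c < 3) vf_scale (fun r => f r * X r 0 c) (Xf (ebase R c)).
Proof.
case=> tX _; apply/funext => r; rewrite fct_sumE /vf_scale /Xf.
by under eq_bigr do rewrite -scalerA; rewrite -scaler_sumr tangent_frame.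
Qed.

Lemma vf_scaleDl (f g : S2 -> R) X : vf_scale (f + g) X = vf_scale f X + vf_scale g X.
Proof. by apply/funext => r; rewrite /vf_scale scalerDl. Qed.

Lemma vf_frame X : poly_vf X -> X = \sum_(c < 3) vf_scale (fun r => X r 0 c) (Xf (ebase R c)).
Proof.
move=> pX; rewrite -{1}(vf_scale1 X) vf_scale_frame //.
by apply: eq_bigr => c _; congr vf_scale; apply/funext => r; rewrite mul1r.
Qed.

Definition frame_coefs (A B C : S2 -> V) : 'I_3 -> 'I_3 -> 'I_3 -> S2 -> R :=
  fun a b c r => A r 0 a * B r 0 b * C r 0 c.

Definition poly_family (h : 'I_3 -> 'I_3 -> 'I_3 -> S2 -> R) :=
  forall a b c, polyS2 (h a b c).

Lemma poly_family0 : poly_family 0.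
Proof. by move=> a b c; exact: polyS2_cst. Qed.

Lemma poly_familyD h h' : poly_family h -> poly_family h' -> poly_family (h + h').
Proof. by move=> ph ph' a b c; apply: polyS2D. Qed.

Lemma poly_familyN h : poly_family h -> poly_family (- h).
Proof. by move=> ph a b c; apply: polyS2N. Qed.

Lemma poly_family_coefs A B C :
  poly_vf A -> poly_vf B -> poly_vf C -> poly_family (frame_coefs A B C).
Proof.
by case=> _ pA [_ pB] [_ pC] a b c; apply: polyS2M; [apply: polyS2M|].
Qed.

Lemma sum_family_apply I (s : seq I) (F : I -> 'I_3 -> 'I_3 -> 'I_3 -> S2 -> R) a b c r :
  (\sum_(i <- s) F i) a b c r = \sum_(i <- s) F i a b c r.
Proof. by elim/big_rec2: _ => // i y1 y2 _ <-. Qed.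

Lemma frame_coefs_identity (r : S2) (a b c : 'I_3) :
  \sum_(i < 3) \sum_(j < 3)
    (Yf (cross (ebase R i) (ebase R j)) r 0 a * Yf (ebase R j) r 0 b * Yf (ebase R i) r 0 c
     - Xf (ebase R j) r 0 a * Xf (cross (ebase R i) (ebase R j)) r 0 b * Yf (ebase R i) r 0 c)
  = 0.
Proof.
(* On R^3 the sum is (|x|^2 - 1) (x_a (d_bc - x_b x_c) - (d_ac - x_a x_c) x_b); its
   Y-part vanishes identically since sum_i x_i (e_i × x) = x × x = 0. *)
rewrite /Xf /Yf; have := sphere_dot r; move: (val r) => x x_unit.
transitivity ((dot x x - 1) * (x 0 a * ((b == c)%:R - x 0 b * x 0 c)
                             - ((a == c)%:R - x 0 a * x 0 c) * x 0 b)); last first.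
  by rewrite x_unit subrr mul0r.
(* With explicit entries the [ordS] index arithmetic reduces by computation. *)
have [x0 [x1 [x2 ->]]] := row3_coords x.
rewrite /dot; under eq_bigr => i _ do under eq_bigr => j _ do
  rewrite !big_ord_recr big_ord0 !mxE.
rewrite !big_ord_recr !big_ord0 !mxE.
by case: a => [[|[|[|?]]] ?] //; case: b => [[|[|[|?]]] ?] //;
  case: c => [[|[|[|?]]] ?] //=; ring.
Qed.

Lemma frame_coefs_sum_eq0 :
  \sum_(i < 3) \sum_(j < 3)
    (frame_coefs (Yf (cross (ebase R i) (ebase R j))) (Yf (ebase R j)) (Yf (ebase R i))
     - frame_coefs (Xf (ebase R j)) (Xf (cross (ebase R i) (ebase R j))) (Yf (ebase R i)))
  = 0.
Proof.
apply/funext => a; apply/funext => b; apply/funext => c; apply/funext => r.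
rewrite sum_family_apply; under eq_bigr do rewrite sum_family_apply.
exact: frame_coefs_identity.
Qed.

End Sphere.

Section BalancedTrilinear.
Variables (R : realType) (M : zmodType).
Local Notation V := 'rV[R]_3.
Local Notation S2 := (S2 R).
Variable T : (S2 -> V) -> (S2 -> V) -> (S2 -> V) -> M.
Hypothesis HT : Cinf_trilinear T.

Lemma T_suml I (s : seq I) (F : I -> S2 -> V) B C :
  (forall i, poly_vf (F i)) -> poly_vf B -> poly_vf C ->
  T (\sum_(i <- s) F i) B C = \sum_(i <- s) T (F i) B C.
Proof.
case: HT => TD _ _ _ _ pF pB pC.
apply: (additive_on_sum (phi := fun X => T X B C) (@poly_vf0 R) (@poly_vfD R)) => //.
by move=> X Y pX pY; apply: TD; apply: poly_vf_is_vf.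
Qed.

Lemma T_summ I (s : seq I) (F : I -> S2 -> V) A C :
  (forall i, poly_vf (F i)) -> poly_vf A -> poly_vf C ->
  T A (\sum_(i <- s) F i) C = \sum_(i <- s) T A (F i) C.
Proof.
case: HT => _ TD _ _ _ pF pA pC.
apply: (additive_on_sum (phi := fun X => T A X C) (@poly_vf0 R) (@poly_vfD R)) => //.
by move=> X Y pX pY; apply: TD; apply: poly_vf_is_vf.
Qed.

Lemma T_sumr I (s : seq I) (F : I -> S2 -> V) A B :
  (forall i, poly_vf (F i)) -> poly_vf A -> poly_vf B ->
  T A B (\sum_(i <- s) F i) = \sum_(i <- s) T A B (F i).
Proof.
case: HT => _ _ TD _ _ pF pA pB.
apply: (additive_on_sum (phi := fun X => T A B X) (@poly_vf0 R) (@poly_vfD R)) => //.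
by move=> X Y pX pY; apply: TD; apply: poly_vf_is_vf.
Qed.

Lemma T_balanced_lm f A B C : polyS2 f -> poly_vf A -> poly_vf B -> poly_vf C ->
  T (vf_scale f A) B C = T A (vf_scale f B) C.
Proof.
case: HT => _ _ _ TZ _ pf pA pB pC.
by apply: TZ; [apply: polyS2_smooth | apply: poly_vf_is_vf..].
Qed.

Lemma T_balanced_mr f A B C : polyS2 f -> poly_vf A -> poly_vf B -> poly_vf C ->
  T A (vf_scale f B) C = T A B (vf_scale f C).
Proof.
case: HT => _ _ _ _ TZ pf pA pB pC.
by apply: TZ; [apply: polyS2_smooth | apply: poly_vf_is_vf..].
Qed.

Definition frame_form (h : 'I_3 -> 'I_3 -> 'I_3 -> S2 -> R) : M :=
  \sum_(a < 3) \sum_(b < 3) \sum_(c < 3)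
    T (Xf (ebase R a)) (Xf (ebase R b)) (vf_scale (h a b c) (Xf (ebase R c))).

Lemma T_frame A B C : poly_vf A -> poly_vf B -> poly_vf C ->
  T A B C = frame_form (frame_coefs A B C).
Proof.
move=> pA pB pC; move: (pA) (pB) (pC) => [_ cA] [_ cB] [_ cC].
have pX c : poly_vf (Xf (ebase R c)) := poly_vf_Xf _.
have pXs f c : polyS2 f -> poly_vf (vf_scale f (Xf (ebase R c))) := @poly_vf_scale_Xf R f c.
rewrite {1}(vf_frame pA) (T_suml _ (fun a => pXs _ a (cA a)) pB pC) /frame_form.
apply: eq_bigr => a _; rewrite (T_balanced_lm (cA a) (pX a) pB pC).
have cAB b := polyS2M (cA a) (cB b).
rewrite (vf_scale_frame _ pB) (T_summ _ (fun b => pXs _ b (cAB b)) (pX a) pC).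
apply: eq_bigr => b _; rewrite (T_balanced_mr (cAB b) (pX a) (pX b) pC).
have cABC c := polyS2M (cAB b) (cC c).
by rewrite (vf_scale_frame _ pC) (T_sumr _ (fun c => pXs _ c (cABC c)) (pX a) (pX b)).
Qed.

Lemma frame_formD h h' : poly_family h -> poly_family h' ->
  frame_form (h + h') = frame_form h + frame_form h'.
Proof.
case: HT => _ _ TD _ _ ph ph'.
rewrite /frame_form -big_split; apply: eq_bigr => a _.
rewrite -big_split; apply: eq_bigr => b _.
rewrite -big_split; apply: eq_bigr => c _ /=.
have pX c : is_vf (Xf (ebase R c)) := poly_vf_is_vf (poly_vf_Xf _).
have pXs f : polyS2 f -> is_vf (vf_scale f (Xf (ebase R c))).
  by move=> pf; apply/poly_vf_is_vf/poly_vf_scale_Xf.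
by rewrite vf_scaleDl (TD _ _ _ _ (pX a) (pX b) (pXs _ (ph a b c)) (pXs _ (ph' a b c))).
Qed.

End BalancedTrilinear.

Theorem lemma4p5p1 (R : realType) (M : zmodType)
    (T : (S2 R -> 'rV[R]_3) -> (S2 R -> 'rV[R]_3) -> (S2 R -> 'rV[R]_3) -> M) :
  Cinf_trilinear T ->
  \sum_(i < 3) \sum_(j < 3)
     (T (Yf (cross (ebase R i) (ebase R j))) (Yf (ebase R j)) (Yf (ebase R i))
      - T (Xf (ebase R j)) (Xf (cross (ebase R i) (ebase R j))) (Yf (ebase R i)))
  = 0.
Proof.
move=> HT.
move: (@poly_family0 R) (@poly_familyD R) (@poly_familyN R) (frame_formD HT) => P0 PD PN phiD.
have vfX v := @poly_vf_Xf R v; have vfY v := @poly_vf_Yf R v.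
have famD i j : poly_family
    (frame_coefs (Yf (cross (ebase R i) (ebase R j))) (Yf (ebase R j)) (Yf (ebase R i))
     - frame_coefs (Xf (ebase R j)) (Xf (cross (ebase R i) (ebase R j))) (Yf (ebase R i))).
  by apply/PD/PN; apply: poly_family_coefs.
rewrite -[RHS](additive_on0 P0 phiD) -(@frame_coefs_sum_eq0 R).
rewrite (additive_on_sum P0 PD phiD) => [|i]; last by apply: big_ind.
apply: eq_bigr => i _; rewrite (additive_on_sum P0 PD phiD) //.
apply: eq_bigr => j _.
rewrite (T_frame HT (vfY _) (vfY _) (vfY _)) (T_frame HT (vfX _) (vfX _) (vfY _)).
by rewrite (additive_onB P0 PN phiD) //; apply: poly_family_coefs.
Qed.
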